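(* Let $A,B,C$, $L,\mu,\mu_x$, $\kappa$, $\kappa_x$ be as below, let $r\ge2\kappa$, $\eta_x=\frac{1}{4rL}$, $\eta_y=\frac{1}{4L}$ (so $r=\eta_y/\eta_x$), and $M=\begin{pmatrix}-C & -B\\ rB^\top & -rA\end{pmatrix}$. Let $\rho_1$ be the spectral radius of $I+\eta_xM$ and $\rho_2$ the spectral radius of $I+\eta_xM+\eta_x^2M^2$. Then $$\max\{\rho_1,\rho_2\}\le1-\frac{1}{64\,r\kappa_x}.$$
   Context: $A\in\mathbb{R}^{m\times m}$, $C\in\mathbb{R}^{n\times n}$ symmetric, $B\in\mathbb{R}^{n\times m}$, with $\mu I\preceq A\preceq LI$ ($0<\mu\le L$), $\|B\|_2\le L$, $\|C\|_2\le L$, and $C+BA^{-1}B^\top\succ0$. $\mu_x=\min\{L,\lambda_{\min}(C+BA^{-1}B^\top)\}$, $\kappa=L/\mu$, $\kappa_x=L/\mu_x$. The spectral radius is the largest modulus of a (complex) eigenvalue. *)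

(* the statement is purely algebraic, stated over an
   arbitrary real closed field R, with complex numbers R[i] from
   mathcomp-real-closed. *)
From HB Require Import structures.
From mathcomp Require Import all_boot all_order all_algebra.
From mathcomp Require Import complex.
Set Implicit Arguments. Unset Strict Implicit. Unset Printing Implicit Defensive.
Import Order.TTheory GRing.Theory Num.Theory.
Local Open Scope ring_scope.

Definition psd (R : realFieldType) k (S : 'M[R]_k) : Prop :=
  forall v : 'cV[R]_k, 0 <= (v^T *m S *m v) 0 0.
Definition pd (R : realFieldType) k (S : 'M[R]_k) : Prop :=
  forall v : 'cV[R]_k, v != 0 -> 0 < (v^T *m S *m v) 0 0.
Definition loewner_le (R : realFieldType) k (X Y : 'M[R]_k) : Prop := psd (Y - X).

Definition vnorm2 (R : rcfType) k (v : 'cV[R]_k) : R := Num.sqrt ((v^T *m v) 0 0).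
Definition opnorm2_le (R : rcfType) p q (B : 'M[R]_(p, q)) (c : R) : Prop :=
  forall v : 'cV[R]_q, vnorm2 (B *m v) <= c * vnorm2 v.

Definition is_lambda_min (R : realFieldType) k (S : 'M[R]_k) (lmin : R) : Prop :=
  eigenvalue S lmin /\ forall l : R, eigenvalue S l -> lmin <= l.

Definition cplx_mx (R : rcfType) p q (X : 'M[R]_(p, q)) : 'M[R[i]]_(p, q) :=
  map_mx (fun x : R => x%:C%C) X.

Definition is_spectral_radius (R : rcfType) k (X : 'M[R]_k) (rho : R) : Prop :=
  (exists z : R[i], eigenvalue (cplx_mx X) z /\ ComplexField.Normc.normc z = rho) /\
  (forall z : R[i], eigenvalue (cplx_mx X) z -> ComplexField.Normc.normc z <= rho).

Definition Mmat (R : ringType) n m (A : 'M[R]_m) (B : 'M[R]_(n, m)) (C : 'M[R]_n) (r : R)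
  : 'M[R]_(n + m) := block_mx (- C) (- B) (r *: B^T) (- (r *: A)).

(* Write an eigenvector of M for the eigenvalue l = a + i b as v = (x1 + i x2, y1 + i y2)
   and pair the two block rows of v M = l v with x and y.  The resulting scalar
   identities involve |x|^2, |y|^2, <x C, x>, <y A, y> and <y B^T, x>.  If b <> 0
   their imaginary parts force |x|^2 = r |y|^2, which gives a <= -L/2 and
   |l|^2 <= 2 L^2 (r + 1).  If b = 0 the Schur complement C + B A^-1 B^T >= lmin
   enters and gives -r L <= a <= -mu_x.  In both cases w = eta_x l lies in a small
   region near 0 on which |1 + w| and |1 + w + w^2| are at most
   1 - mu_x eta_x / 16 = 1 - 1 / (64 r kappa_x), and every eigenvalue of
   I + eta_x M or I + eta_x M + eta_x^2 M^2 has that form. *)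

From HB Require Import structures.
From mathcomp Require Import all_boot all_order all_algebra.
From mathcomp Require Import complex spectral.
From mathcomp Require Import ring lra.
Import Order.TTheory GRing.Theory Num.Theory.
Local Open Scope ring_scope.
Set Implicit Arguments. Unset Strict Implicit. Unset Printing Implicit Defensive.

Section RowDot.
Variables (R : realFieldType) (k : nat).
Implicit Types (u v w : 'rV[R]_k) (c : R).

Definition dot u w : R := (u *m w^T) 0 0.

Lemma dotE u w : dot u w = \sum_j u 0 j * w 0 j.
Proof. by rewrite /dot mxE; apply: eq_bigr => j _; rewrite mxE. Qed.

Lemma dotC u w : dot u w = dot w u.
Proof. by rewrite !dotE; apply: eq_bigr => j _; rewrite mulrC. Qed.

Lemma dotDl u v w : dot (u + v) w = dot u w + dot v w.
Proof. by rewrite /dot mulmxDl mxE. Qed.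

Lemma dotZl c u w : dot (c *: u) w = c * dot u w.
Proof. by rewrite /dot -scalemxAl mxE. Qed.

Lemma dotNl u w : dot (- u) w = - dot u w.
Proof. by rewrite -scaleN1r dotZl mulN1r. Qed.

Lemma dotBl u v w : dot (u - v) w = dot u w - dot v w.
Proof. by rewrite dotDl dotNl. Qed.

Lemma dotDr u v w : dot w (u + v) = dot w u + dot w v.
Proof. by rewrite ![dot w _]dotC dotDl. Qed.

Lemma dotZr c u w : dot w (c *: u) = c * dot w u.
Proof. by rewrite ![dot w _]dotC dotZl. Qed.

Lemma dotNr u w : dot w (- u) = - dot w u.
Proof. by rewrite ![dot w _]dotC dotNl. Qed.

Lemma dotBr u v w : dot w (u - v) = dot w u - dot w v.
Proof. by rewrite dotDr dotNr. Qed.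

Lemma dot0l w : dot 0 w = 0.
Proof. by rewrite /dot mul0mx mxE. Qed.

Lemma dot0r w : dot w 0 = 0.
Proof. by rewrite dotC dot0l. Qed.

Lemma dotxx_ge0 u : 0 <= dot u u.
Proof. by rewrite dotE; apply: sumr_ge0 => j _; rewrite -expr2 sqr_ge0. Qed.

Lemma dotxx_eq0 u : (dot u u == 0) = (u == 0).
Proof.
apply/idP/eqP => [|->]; last by rewrite dot0l.
rewrite dotE psumr_eq0 => [/allP u0|j _]; last by rewrite -expr2 sqr_ge0.
apply/rowP => j; have /implyP/(_ isT) := u0 j (mem_index_enum _).
by rewrite mxE mulf_eq0 orbb => /eqP.
Qed.

(* Cauchy-Schwarz for the Hermitian product of [x1 + i x2] and [w1 + i w2],
   written in real and imaginary parts. *)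
Lemma dot2_cauchy_schwarz x1 x2 w1 w2 :
  (dot x1 w1 + dot x2 w2) ^+ 2 + (dot x2 w1 - dot x1 w2) ^+ 2 <=
  (dot x1 x1 + dot x2 x2) * (dot w1 w1 + dot w2 w2).
Proof.
set X := dot x1 x1 + dot x2 x2; set W := dot w1 w1 + dot w2 w2.
set P := dot x1 w1 + dot x2 w2; set Q := dot x2 w1 - dot x1 w2.
have X0 : 0 <= X by rewrite addr_ge0 ?dotxx_ge0.
have [Xz|Xn0] := eqVneq X 0.
  have := dotxx_ge0 x1; have := dotxx_ge0 x2; rewrite /X in Xz => h2 h1.
  have /eqP : dot x1 x1 = 0 by lra.
  have /eqP : dot x2 x2 = 0 by lra.
  rewrite !dotxx_eq0 => /eqP x2_0 /eqP x1_0.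
  by rewrite /P /Q /X x1_0 x2_0 !dot0l !addr0 subrr expr0n mul0r addr0.
have Xpos : 0 < X by rewrite lt_def Xn0 X0.
(* [z1 + i z2] is [X (w1 + i w2)] minus its projection on [x1 + i x2]. *)
set z1 := X *: w1 - P *: x1 - Q *: x2.
set z2 := X *: w2 - P *: x2 + Q *: x1.
have proj : dot z1 z1 + dot z2 z2 = X * (X * W - P ^+ 2 - Q ^+ 2).
  rewrite /z1 /z2 !(dotDl, dotBl, dotDr, dotBr, dotNl, dotNr, dotZl, dotZr).
  rewrite [dot w1 x1]dotC [dot w1 x2]dotC [dot w2 x1]dotC [dot w2 x2]dotC [dot x2 x1]dotC.
  rewrite /X /W /P /Q; ring.
have : 0 <= X * (X * W - P ^+ 2 - Q ^+ 2) by rewrite -proj addr_ge0 ?dotxx_ge0.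
rewrite pmulr_rge0 //; lra.
Qed.

Lemma dot_cauchy_schwarz u w : dot u w ^+ 2 <= dot u u * dot w w.
Proof.
have := dot2_cauchy_schwarz u 0 w 0.
by rewrite !(dot0l, dot0r) !addr0 subr0 expr0n addr0.
Qed.

End RowDot.

Section QuadraticForms.
Variable R : realFieldType.

Lemma dot_mulmx p q (K : 'M[R]_(p, q)) (u : 'rV_p) (w : 'rV_q) :
  dot (u *m K) w = dot u (w *m K^T).
Proof. by rewrite /dot trmx_mul trmxK mulmxA. Qed.

Lemma dot_sym_mx k (K : 'M[R]_k) (u w : 'rV_k) : K^T = K -> dot (u *m K) w = dot (w *m K) u.
Proof. by move=> sK; rewrite dot_mulmx sK dotC. Qed.

Lemma dot_mul_scalar_mx k (c : R) (u : 'rV[R]_k) : dot (u *m c%:M) u = c * dot u u.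
Proof. by rewrite mul_mx_scalar dotZl. Qed.

Lemma psd_dot k (K : 'M[R]_k) u : psd K -> 0 <= dot (u *m K) u.
Proof. by move=> /(_ u^T); rewrite trmxK. Qed.

Lemma pd_dot k (K : 'M[R]_k) u : pd K -> u != 0 -> 0 < dot (u *m K) u.
Proof. by move=> /(_ u^T); rewrite trmxK trmx_eq0. Qed.

Lemma loewner_le_dot k (X Y : 'M[R]_k) u :
  loewner_le X Y -> dot (u *m X) u <= dot (u *m Y) u.
Proof. by move=> /(psd_dot u); rewrite mulmxBr dotBl subr_ge0. Qed.

Lemma loewner_ge_scalar_unitmx k (A : 'M[R]_k) mu :
  0 < mu -> loewner_le mu%:M A -> A \in unitmx.
Proof.
move=> mu0 hA; rewrite unitmxE unitfE; apply/negP => /det0P [v v0 vA].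
have := loewner_le_dot v hA; rewrite vA dot0l dot_mul_scalar_mx.
by rewrite pmulr_rle0 // leNgt lt_def dotxx_eq0 v0 dotxx_ge0.
Qed.

Lemma loewner_ge_scalar_dot_invmx k (A : 'M[R]_k) mu (y : 'rV_k) :
  0 < mu -> loewner_le mu%:M A ->
  0 <= dot (y *m invmx A) y /\ mu * dot (y *m invmx A) y <= dot y y.
Proof.
move=> mu0 hA; have Au := loewner_ge_scalar_unitmx mu0 hA.
set u := y *m invmx A; set om := dot u y.
have om_uA : om = dot (u *m A) u by rewrite /om /u mulmxKV // dotC.
have h1 : mu * dot u u <= om by rewrite om_uA -dot_mul_scalar_mx loewner_le_dot.
have om0 : 0 <= om by apply: le_trans h1; rewrite mulr_ge0 ?dotxx_ge0 ?ltW.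
split => //; have [->|omn0] := eqVneq om 0; first by rewrite mulr0 dotxx_ge0.
have om_gt0 : 0 < om by rewrite lt_def omn0 om0.
rewrite -(ler_pM2r om_gt0) -mulrA -expr2.
apply: le_trans (_ : mu * (dot u u * dot y y) <= _).
  by apply: ler_wpM2l; [exact: ltW | exact: dot_cauchy_schwarz].
by rewrite mulrA [dot y y * om]mulrC ler_wpM2r ?dotxx_ge0.
Qed.

End QuadraticForms.

Section OperatorNorm.
Variable R : rcfType.

Lemma opnorm2_le_dot p q (K : 'M[R]_(p, q)) c (u : 'rV_q) :
  0 <= c -> opnorm2_le K c -> dot (u *m K^T) (u *m K^T) <= c ^+ 2 * dot u u.
Proof.
move=> c0 /(_ u^T); rewrite /vnorm2.
have -> : ((K *m u^T)^T *m (K *m u^T)) 0 0 = dot (u *m K^T) (u *m K^T).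
  by rewrite /dot !trmx_mul !trmxK.
rewrite trmxK -/(dot u u) => h; have h0 := sqrtr_ge0 (dot (u *m K^T) (u *m K^T)).
have := ler_pM h0 h0 h h.
by rewrite -!expr2 exprMn !sqr_sqrtr ?dotxx_ge0.
Qed.

Lemma opnorm2_le_dot2_sqr p q (K : 'M[R]_(p, q)) c (u1 u2 : 'rV_q) (w1 w2 : 'rV_p) :
  0 <= c -> opnorm2_le K c ->
  (dot (u1 *m K^T) w1 + dot (u2 *m K^T) w2) ^+ 2
    + (dot (u2 *m K^T) w1 - dot (u1 *m K^T) w2) ^+ 2
  <= c ^+ 2 * (dot u1 u1 + dot u2 u2) * (dot w1 w1 + dot w2 w2).
Proof.
move=> c0 hK; apply: le_trans (dot2_cauchy_schwarz _ _ _ _) _.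
rewrite ler_wpM2r ?addr_ge0 ?dotxx_ge0 // mulrDr.
by rewrite lerD ?opnorm2_le_dot.
Qed.

Lemma opnorm2_le_dot_sqr p q (K : 'M[R]_(p, q)) c (u : 'rV_q) (w : 'rV_p) :
  0 <= c -> opnorm2_le K c ->
  dot (u *m K^T) w ^+ 2 <= c ^+ 2 * dot u u * dot w w.
Proof.
move=> c0 /(opnorm2_le_dot2_sqr u 0 w 0 c0).
by rewrite mul0mx !(dot0l, dot0r) !addr0 subr0 expr0n addr0.
Qed.

End OperatorNorm.

Section RayleighBound.
Local Open Scope sesquilinear_scope.

Lemma eigenvalue_spectral_diag (C : numClosedFieldType) k (A : 'M[C]_k) j :
  A \is normalmx -> eigenvalue A (spectral_diag A 0 j).
Proof.
move=> /orthomx_spectralP AE; set P := spectralmx A in AE *; set d := spectral_diag A in AE *.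
have Pu : P \in unitmx := spectral_unit A.
have rowjV : row j P *m invmx P = delta_mx 0 j by rewrite -row_mul mulmxV // row1.
apply/eigenvalueP; exists (row j P).
  by rewrite AE !mulmxA rowjV -rowE row_diag_mx -scalemxAl -rowE.
apply/eqP => /(congr1 (mulmx^~ (invmx P))); rewrite rowjV mul0mx.
by move/matrixP/(_ 0 j); rewrite !mxE !eqxx => /eqP; rewrite oner_eq0.
Qed.

Variable R : rcfType.
Local Notation f := (real_complex R).

Lemma real_complex_dot k (y z : 'rV[R]_k) :
  f (dot y z) = (map_mx f y *m (map_mx f z)^t*) 0 0.
Proof.
have -> : f (dot y z) = map_mx f (y *m z^T) 0 0 by rewrite mxE.
rewrite map_mxM map_trmx; congr ((_ *m _) 0 0).
by apply/matrixP => i i'; rewrite !mxE conj_Creal ?complex_real.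
Qed.

Lemma symmx_lambda_min_dot k (S : 'M[R]_k) lmin (x : 'rV_k) :
  S^T = S -> is_lambda_min S lmin -> lmin * dot x x <= dot (x *m S) x.
Proof.
move=> Ssym [_ Smin]; set cS := map_mx f S.
have cS_herm : cS \is hermsymmx.
  apply: realsym_hermsym; last by apply/mxOverP => i j; rewrite mxE complex_real.
  by apply/is_hermitianmxP; rewrite expr0 scale1r map_mx_id // /cS map_trmx Ssym.
have /orthomx_spectralP cSE := hermitian_normalmx cS_herm.
set P := spectralmx cS in cSE; set d := spectral_diag cS in cSE.
have Pu : P \is unitarymx := spectral_unitarymx cS.
have d_ge : forall j, f lmin <= d 0 j.
  move=> j; have dj_real := mxOverP (hermitian_spectral_diag_real cS_herm) 0 j.
  have dj : f (complex.Re (d 0 j)) = d 0 j by apply: RRe_real.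
  have := eigenvalue_spectral_diag j (hermitian_normalmx cS_herm).
  by rewrite -/d -dj eigenvalue_map => /Smin; rewrite -dj lecR.
set u := map_mx f x *m P^t*.
have u_adj : P *m (map_mx f x)^t* = u^t* by rewrite /u trmx_mul map_mxM trmxCK.
have fxSx : f (dot (x *m S) x) = \sum_j u 0 j * d 0 j * (u 0 j)^*.
  rewrite real_complex_dot map_mxM -/cS cSE invmx_unitary // !mulmxA -/u.
  rewrite -mulmxA u_adj mxE; apply: eq_bigr => j _.
  by rewrite mul_mx_diag !mxE.
have fxx : f (dot x x) = \sum_j u 0 j * (u 0 j)^*.
  have PtP : P^t* *m P = 1%:M by rewrite -invmx_unitary // mulVmx ?unitarymx_unit.
  rewrite real_complex_dot -[map_mx f x in X in X *m _]mulmx1 -PtP mulmxA -/u.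
  by rewrite -mulmxA u_adj mxE; apply: eq_bigr => j _; rewrite !mxE.
rewrite -lecR; have -> : f (lmin * dot x x) = f lmin * f (dot x x) := rmorphM f _ _.
rewrite fxSx fxx mulr_sumr; apply: ler_sum => j _.
by rewrite [u 0 j * d 0 j]mulrC -mulrA ler_wpM2r ?mul_conjC_ge0.
Qed.

End RayleighBound.

Lemma sqr_le_bounds (R : realDomainType) (x c : R) :
  0 <= c -> x ^+ 2 <= c ^+ 2 -> - c <= x <= c.
Proof.
move=> c0 h; rewrite -ler_norml.
by rewrite -(ler_pXn2r (isT : (0 < 2)%N)) ?nnegrE // real_normK ?num_real.
Qed.

(* The eigenvalue equations of [M] read through the quadratic forms of an
   eigenvector [(x, y)]: [X = <x, x>], [Y = <y, y>], [g = <x C, x>],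
   [P = <y B^T, x>], [al = <y A, y>], [om = <y A^-1, y>] and [s] is the Schur
   complement form at [x]; [Q] is the imaginary counterpart of [P]. *)
Section ScalarEigenvalueBounds.
Variable R : realFieldType.
Implicit Types L mu r lmin mux a b X Y al om g P Q s : R.

Lemma real_eig_ge L r a X Y al g P :
  0 <= L -> 1 <= r -> 0 <= X -> 0 <= Y -> 0 < X + Y -> al <= L * Y ->
  g ^+ 2 <= (L * X) ^+ 2 -> - g + r * P = a * X -> - P - r * al = a * Y ->
  - (r * L) <= a.
Proof.
move=> L0 r1 X0 Y0 XY0 al_le g_sqr eqX eqY.
have /andP [_ g_le] : - (L * X) <= g <= L * X by apply: sqr_le_bounds; rewrite ?mulr_ge0.
have eqXY : a * (X + r * Y) = - g - r * (r * al) by rewrite mulrDr -eqX; nra.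
rewrite -(ler_pM2r (_ : 0 < X + r * Y)) ?eqXY; last by nra.
have : r * (r * al) <= r * (r * (L * Y)) by rewrite !ler_wpM2l //; lra.
have : L * X <= r * (L * X) by rewrite ler_peMl ?mulr_ge0.
nra.
Qed.

Lemma real_eig_le_degenerate mu r a Y al :
  0 <= r -> 0 < Y -> mu * Y <= al -> - (r * al) = a * Y -> a <= - (r * mu).
Proof.
move=> r0 Y0 al_ge eqY.
by rewrite -(ler_pM2r Y0) -eqY mulNr lerN2 -mulrA ler_wpM2l.
Qed.

(* If [a > - mux], either sign of [a] contradicts [lmin X <= s] through the
   Schur complement identity for [s]. *)
Lemma real_eig_le_nonpos mu r lmin mux a X Y om s :
  0 < mu -> 0 < X -> 0 <= Y -> mux <= lmin -> mux <= r * mu ->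
  0 <= om -> mu * om <= Y -> lmin * X <= s ->
  s = - a * X + a * r * Y + a ^+ 2 * om -> a <= 0 -> a <= - mux.
Proof.
move=> mu0 X0 Y0 mux_le mux_le_rmu om0 om_le s_ge eq_s a_le0.
rewrite leNgt; apply/negP => a_gt.
have h1 : mu * s <= - mu * a * X + a * Y * (mu * r + a).
  have : mu * (a ^+ 2 * om) <= a ^+ 2 * Y by rewrite mulrCA ler_wpM2l // sqr_ge0.
  rewrite eq_s; nra.
have h2 : a * Y * (mu * r + a) <= 0.
  rewrite -mulrA; apply: mulr_le0_ge0 => //; apply: mulr_ge0 => //; nra.
have : mu * (lmin * X) <= mu * s by rewrite ler_pM2l.
have : - a * X < mux * X by rewrite ltr_pM2r //; lra.
have : mux * X <= lmin * X by rewrite ler_pM2r.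
nra.
Qed.

Lemma real_eig_not_pos L mu r lmin a X Y al om g P s :
  0 < mu -> 0 < L -> 2 * L <= r * mu -> 0 < lmin -> 0 < X -> mu * Y <= al ->
  0 <= om -> mu * om <= Y -> g ^+ 2 <= (L * X) ^+ 2 -> lmin * X <= s ->
  - g + r * P = a * X -> - P - r * al = a * Y ->
  s = - a * X + a * r * Y + a ^+ 2 * om -> 0 < a -> False.
Proof.
move=> mu0 L0 rmu lmin0 X0 al_ge om0 om_le g_sqr s_ge eqX eqY eq_s a0.
have rmu0 : 0 < r * mu by lra.
have r0 : 0 <= r by nra.
have key : r * mu * (s - g) <= (r * mu + a) * (r * (r * al) + r * a * Y).
  rewrite -subr_ge0.
  have -> : (r * mu + a) * (r * (r * al) + r * a * Y) - r * mu * (s - g)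
          = a * r * (r * al - r * (mu * Y) + a * Y - a * (mu * om)).
    rewrite eq_s; have -> : g = - a * X - r * (r * al) - r * a * Y by nra.
    ring.
  apply: mulr_ge0; first by nra.
  have : a * (mu * om) <= a * Y by rewrite ler_wpM2l //; lra.
  have := ler_wpM2l r0 al_ge; lra.
have eqXY : r * (r * al) + r * a * Y = - a * X - g by nra.
rewrite eqXY in key.
have : r * mu * (lmin * X) <= r * mu * s by rewrite ler_pM2l.
have := mulr_gt0 rmu0 (mulr_gt0 lmin0 X0).
have /andP [g_ge _] := sqr_le_bounds (mulr_ge0 (ltW L0) (ltW X0)) g_sqr.
have : - a * g <= a * (L * X) by nra.
have : a * X * (L - r * mu - a) < 0 by rewrite pmulr_rlt0; [lra | exact: mulr_gt0].
nra.
Qed.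


Lemma real_eig_bounds L mu r lmin mux a X Y al om g P s :
  0 < mu -> mu <= L -> 2 * L <= r * mu -> mux <= L -> mux <= lmin -> 0 < lmin ->
  0 <= X -> 0 <= Y -> 0 < X + Y -> mu * Y <= al -> al <= L * Y ->
  0 <= om -> mu * om <= Y -> g ^+ 2 <= (L * X) ^+ 2 -> P ^+ 2 <= L ^+ 2 * X * Y ->
  lmin * X <= s -> - g + r * P = a * X -> - P - r * al = a * Y ->
  s = - a * X + a * r * Y + a ^+ 2 * om ->
  - (r * L) <= a <= - mux.
Proof.
move=> mu0 muL rmu muxL mux_le lmin0 X0 Y0 XY0 al_ge al_le om0 om_le g_sqr P_sqr s_ge eqX eqY eq_s.
have L0 : 0 < L by apply: lt_le_trans muL.
have r2 : 2 <= r by rewrite -(ler_pM2r mu0); lra.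
rewrite (real_eig_ge (ltW L0) _ X0 Y0 XY0 al_le g_sqr eqX eqY) /=; last by lra.
have [X_eq0|X_neq0] := eqVneq X 0.
  move: XY0 P_sqr eqY; rewrite X_eq0 mulr0 mul0r add0r => Y_gt0 P_sqr eqY.
  have P0 : P = 0 by apply/eqP; rewrite -sqrf_eq0 eq_le P_sqr sqr_ge0.
  rewrite P0 oppr0 add0r in eqY.
  have r0 : 0 <= r by lra.
  have := real_eig_le_degenerate r0 Y_gt0 al_ge eqY; nra.
have X_gt0 : 0 < X by rewrite lt_def X_neq0.
have [a_le0|a_gt0] := lerP a 0.
  have mux_le_rmu : mux <= r * mu by lra.
  exact: real_eig_le_nonpos mu0 X_gt0 Y0 mux_le mux_le_rmu om0 om_le s_ge eq_s a_le0.
by case: (real_eig_not_pos mu0 L0 rmu lmin0 X_gt0 al_ge om0 om_le g_sqr s_ge eqX eqY eq_s a_gt0).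
Qed.

(* [b != 0] forces [X = r Y], by comparing the two expressions of [Q]. *)
Lemma cplx_eig_bounds L mu r a b X Y al g P Q :
  0 < mu -> mu <= L -> 2 * L <= r * mu -> b != 0 -> 0 <= X -> 0 <= Y -> 0 < X + Y ->
  mu * Y <= al -> g ^+ 2 <= (L * X) ^+ 2 -> P ^+ 2 + Q ^+ 2 <= L ^+ 2 * X * Y ->
  - g + r * P = a * X -> - P - r * al = a * Y -> r * Q = - b * X -> Q = - b * Y ->
  a <= - L / 2 /\ a ^+ 2 + b ^+ 2 <= 2 * L ^+ 2 * (r + 1).
Proof.
move=> mu0 muL rmu b0 X0 Y0 XY0 al_ge g_sqr PQ_sqr eqX eqY eqXi eqYi.
have L0 : 0 < L by apply: lt_le_trans muL.
have r2 : 2 <= r by rewrite -(ler_pM2r mu0); lra.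
have XrY : X = r * Y.
  apply: (mulfI b0); apply/eqP; rewrite -subr_eq0 -mulrBr.
  rewrite eqYi in eqXi; apply/eqP; nra.
have X_gt0 : 0 < X by rewrite XrY; nra.
have /andP [g_ge g_le] := sqr_le_bounds (mulr_ge0 (ltW L0) X0) g_sqr.
split.
  have : 2 * a * X <= - L * X.
    have -> : 2 * a * X = - g - r * (r * al) by rewrite XrY; nra.
    rewrite XrY in g_ge g_le *; nra.
  by rewrite ler_pdivlMr //; nra.
have sqr_aX : (a ^+ 2 + b ^+ 2) * X ^+ 2 = (r * P - g) ^+ 2 + (r * Q) ^+ 2.
  have -> : r * P - g = a * X by rewrite -eqX addrC.
  by rewrite eqXi; ring.
have sqr_diff : (r * P - g) ^+ 2 <= 2 * (r * P) ^+ 2 + 2 * g ^+ 2.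
  by rewrite -subr_ge0 (_ : _ - _ = (r * P + g) ^+ 2) ?sqr_ge0 //; ring.
have rPQ : r ^+ 2 * (P ^+ 2 + Q ^+ 2) <= r ^+ 2 * (L ^+ 2 * X * Y).
  by rewrite ler_wpM2l // sqr_ge0.
rewrite -(ler_pM2r (exprn_gt0 2 X_gt0)) sqr_aX.
rewrite XrY in g_sqr *; nra.
Qed.

End ScalarEigenvalueBounds.

Definition stable_region (R : realFieldType) (d a b : R) : Prop :=
  [/\ a ^+ 2 + b ^+ 2 <= 4 / 25, a <= - (8 * d) & 2 * a + (a ^+ 2 + b ^+ 2) <= - (2 * d)].

Section StableRegion.
Variable R : realFieldType.
Implicit Types L r mux e a b : R.

Lemma real_eig_stable L r mux e a :
  2 <= r -> e * (4 * r * L) = 1 -> 0 <= e -> 0 <= mux <= L -> - (r * L) <= a <= - mux ->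
  stable_region (mux * e / 16) (e * a) 0.
Proof.
move=> r2 erL e0 /andP [mux0 muxL] /andP [a_ge a_le].
have erL4 : e * (r * L) = 1 / 4 by rewrite -[X in X / 4]erL; field.
have A_ge : - (1 / 4) <= e * a by have := ler_wpM2l e0 a_ge; rewrite mulrN erL4.
have A_le : e * a <= - (mux * e) by rewrite mulrC -mulNr ler_wpM2r.
have m0 : 0 <= mux * e by rewrite mulr_ge0.
rewrite /stable_region expr0n /= addr0; split; nra.
Qed.

Lemma cplx_eig_stable L r mux e a b :
  2 <= r -> e * (4 * r * L) = 1 -> 0 <= e -> 0 <= mux <= L ->
  a <= - L / 2 -> a ^+ 2 + b ^+ 2 <= 2 * L ^+ 2 * (r + 1) ->
  stable_region (mux * e / 16) (e * a) (e * b).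
Proof.
move=> r2 erL e0 /andP [mux0 muxL] a_le ab_le.
set u := e * L.
have ru : 4 * r * u = 1 by rewrite -[RHS]erL /u; ring.
have A_le : e * a <= - u / 2 by rewrite /u; have := ler_wpM2l e0 a_le; rewrite mulrA mulrN.
have AB_le : (e * a) ^+ 2 + (e * b) ^+ 2 <= 2 * u ^+ 2 * (r + 1).
  have -> : (e * a) ^+ 2 + (e * b) ^+ 2 = e ^+ 2 * (a ^+ 2 + b ^+ 2) by ring.
  have -> : 2 * u ^+ 2 * (r + 1) = e ^+ 2 * (2 * L ^+ 2 * (r + 1)) by rewrite /u; ring.
  by rewrite ler_wpM2l ?sqr_ge0.
have m_le : mux * e <= u by rewrite /u mulrC ler_wpM2l.
have m0 : 0 <= mux * e by rewrite mulr_ge0.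
have u0 : 0 <= u by rewrite mulr_ge0 //; lra.
rewrite /stable_region; split; nra.
Qed.

End StableRegion.

Section StableRegionNorm.
Variable R : rcfType.
Local Open Scope complex_scope.

Lemma normc_le (x y d : R) : 0 <= d -> x ^+ 2 + y ^+ 2 <= d ^+ 2 ->
  ComplexField.Normc.normc (x +i* y) <= d.
Proof. by move=> d0 h /=; rewrite -(ger0_norm d0) -sqrtr_sqr ler_wsqrtr. Qed.

Lemma stable_region_normc1 (d : R) (w : R[i]) :
  stable_region d (complex.Re w) (complex.Im w) ->
  ComplexField.Normc.normc (1 + w) <= 1 - d.
Proof.
case: w => a b [/= w_le a_le step_le].
apply: normc_le; nra.
Qed.

Lemma stable_region_normc2 (d : R) (w : R[i]) : 0 <= d ->
  stable_region d (complex.Re w) (complex.Im w) ->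
  ComplexField.Normc.normc (1 + w + w ^+ 2) <= 1 - d.
Proof.
case: w => a b d0 [w_le a_le step_le]; rewrite /= in w_le a_le step_le.
have -> : (1 + (a +i* b) + (a +i* b) ^+ 2 =
          (1 + a + (a ^+ 2 - b ^+ 2)) +i* (b + 2 * a * b))%C.
  by rewrite !expr2; simpc; congr (_ +i* _); ring.
apply: normc_le; first by nra.
set N := a ^+ 2 + b ^+ 2 in w_le step_le.
have -> : (1 + a + (a ^+ 2 - b ^+ 2)) ^+ 2 + (b + 2 * a * b) ^+ 2
   = 1 + 2 * a + 3 * a ^+ 2 - b ^+ 2 + 2 * a * N + N ^+ 2 by rewrite /N; ring.
have /andP [a_ge _] : - (2 / 5) <= a <= 2 / 5.
  apply: sqr_le_bounds; first by lra.
  rewrite (_ : (2 / 5) ^+ 2 = 4 / 25); last by field.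
  by have := sqr_ge0 b; rewrite /N in w_le; lra.
have N0 : 0 <= N by rewrite addr_ge0 ?sqr_ge0.
have a_le0 : a <= 0 by lra.
have : 2 * a * N <= 0 by nra.
have : N ^+ 2 <= 4 / 25 * N by rewrite expr2 ler_wpM2r.
have : 3 * a ^+ 2 <= - (6 / 5) * a by rewrite expr2; nra.
have := sqr_ge0 d; have := sqr_ge0 b.
rewrite /N in w_le step_le *; nra.
Qed.

End StableRegionNorm.

Section EigenvalueAlgebra.
Variables (F : fieldType) (k : nat).
Implicit Types (N : 'M[F]_k) (e z : F).

Lemma eigenvalue_affine N e z : e != 0 ->
  eigenvalue (1%:M + e *: N) z -> exists2 l, eigenvalue N l & z = 1 + e * l.
Proof.
move=> e0 /eigenvalueP [v vNz v0]; exists ((z - 1) / e); last by field.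
have evN : e *: (v *m N) = (z - 1) *: v.
  by rewrite scalerBl scale1r -vNz mulmxDr mulmx1 -scalemxAr addrAC subrr add0r.
apply/eigenvalueP; exists v => //.
by rewrite -(scalerK e0 (v *m N)) evN scalerA mulrC.
Qed.

Lemma eigenvalue_quadratic_roots N e z (l1 l2 : F) : e != 0 ->
  e ^+ 2 * (l1 + l2) = - e -> e ^+ 2 * (l1 * l2) = 1 - z ->
  eigenvalue (1%:M + e *: N + e ^+ 2 *: (N *m N)) z ->
  exists2 l, eigenvalue N l & z = 1 + e * l + (e * l) ^+ 2.
Proof.
move=> e0 sum_l prod_l /eigenvalueP [v vNz v0].
have vN2 : v + e *: (v *m N) + e ^+ 2 *: (v *m N *m N) = z *: v.
  by rewrite -vNz !mulmxDr mulmx1 -!scalemxAr mulmxA.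
set w := v *m (N - l1%:M).
have wN : w *m (N - l2%:M) = v *m N *m N - l1 *: (v *m N) - l2 *: (v *m N - l1 *: v).
  by rewrite /w !mulmxBr !mul_mx_scalar mulmxBl -scalemxAl.
have wN0 : w *m (N - l2%:M) = 0.
  apply: (scalerI (expf_neq0 2 e0)); rewrite scaler0 wN.
  move: (v *m N) (v *m N *m N) vN2 => u1 u2 vN2.
  apply/rowP => j; move/rowP/(_ j): vN2; rewrite !mxE => vN2j.
  transitivity (- ((e ^+ 2 * (l1 + l2) + e) * u1 0 j)
     + (e ^+ 2 * (l1 * l2) - (1 - z)) * v 0 j
     + (v 0 j + e * u1 0 j + e ^+ 2 * u2 0 j - z * v 0 j)); first by ring.
  by rewrite vN2j sum_l prod_l addNr subrr mul0r oppr0 mul0r !add0r subrr.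
have z_root (l : F) : e ^+ 2 * (l - l1) * (l - l2) = 0 -> z = 1 + e * l + (e * l) ^+ 2.
  move=> l_root; transitivity (1 + e * l + (e * l) ^+ 2 - e ^+ 2 * (l - l1) * (l - l2)
    + (z - 1 + e ^+ 2 * (l1 * l2)) - l * (e + e ^+ 2 * (l1 + l2))); first by ring.
  by rewrite l_root prod_l sum_l; ring.
have [w0|w_neq0] := eqVneq w 0.
  exists l1; last by rewrite (z_root l1) // subrr mulr0 mul0r.
  by apply/eigenvalueP; exists v => //; apply/eqP; rewrite -subr_eq0 -mul_mx_scalar -mulmxBr -/w w0.
exists l2; last by rewrite (z_root l2) // subrr mulr0.
by apply/eigenvalueP; exists w => //; apply/eqP; rewrite -subr_eq0 -mul_mx_scalar -mulmxBr wN0.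
Qed.


End EigenvalueAlgebra.

Lemma eigenvalue_quadratic (C : numClosedFieldType) k (N : 'M[C]_k) e z : e != 0 ->
  eigenvalue (1%:M + e *: N + e ^+ 2 *: (N *m N)) z ->
  exists2 l, eigenvalue N l & z = 1 + e * l + (e * l) ^+ 2.
Proof.
move=> e0 Nz; have [s s2] : exists s, s ^+ 2 = 1 - 4 * (1 - z).
  by exists (sqrtC (1 - 4 * (1 - z))); rewrite sqrtCK.
have two0 : (2 : C) != 0 by rewrite pnatr_eq0.
apply: (eigenvalue_quadratic_roots (l1 := (s - 1) / (2 * e)) (l2 := (- s - 1) / (2 * e)) e0 _ _ Nz).
  by field.
have four0 : (4 : C) != 0 by rewrite pnatr_eq0.
have -> : e ^+ 2 * ((s - 1) / (2 * e) * ((- s - 1) / (2 * e))) = (1 - s ^+ 2) / 4 by field.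
by rewrite s2; field.
Qed.

Section ReIm.
Variables (R : rcfType) (k : nat).
Local Open Scope complex_scope.

Lemma Re_sum (F : 'I_k -> R[i]) : complex.Re (\sum_j F j) = \sum_j complex.Re (F j).
Proof.
by apply: (big_ind2 (fun c x => complex.Re c = x)) => // [[? ?] ? [? ?] ?] /= <- <-.
Qed.

Lemma Im_sum (F : 'I_k -> R[i]) : complex.Im (\sum_j F j) = \sum_j complex.Im (F j).
Proof.
by apply: (big_ind2 (fun c x => complex.Im c = x)) => // [[? ?] ? [? ?] ?] /= <- <-.
Qed.

Lemma cplx_mx_eigenvector_ReIm (K : 'M[R]_k) (v : 'rV[R[i]]_k) (l : R[i]) :
  v *m cplx_mx K = l *: v ->
  let p := map_mx (@complex.Re R) v in let q := map_mx (@complex.Im R) v in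
  p *m K = complex.Re l *: p - complex.Im l *: q /\
  q *m K = complex.Re l *: q + complex.Im l *: p.
Proof.
move=> vK p q; split; apply/rowP => j; move/rowP/(_ j): vK; rewrite !mxE.
- move/(congr1 (@complex.Re R)); rewrite Re_sum => vKj.
  transitivity (complex.Re (l * v 0 j)); last by case: l (v 0 j) {vKj} => ? ? [? ?] /=; ring.
  by rewrite -vKj; apply: eq_bigr => i _; rewrite !mxE; case: (v 0 i) => ? ? /=; ring.
- move/(congr1 (@complex.Im R)); rewrite Im_sum => vKj.
  transitivity (complex.Im (l * v 0 j)); last by case: l (v 0 j) {vKj} => ? ? [? ?] /=; ring.
  by rewrite -vKj; apply: eq_bigr => i _; rewrite !mxE; case: (v 0 i) => ? ? /=; ring.
Qed.

End ReIm.

Lemma mul_row_Mmat (R : comNzRingType) n m (A : 'M[R]_m) (B : 'M[R]_(n, m)) (C : 'M[R]_n) r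
    (x : 'rV_n) (y : 'rV_m) :
  row_mx x y *m Mmat A B C r = row_mx (- (x *m C) + r *: (y *m B^T)) (- (x *m B) - r *: (y *m A)).
Proof. by rewrite /Mmat mul_row_block !mulmxN -!scalemxAr. Qed.

Lemma pd_lambda_min_gt0 (R : realFieldType) k (S : 'M[R]_k) lmin :
  pd S -> is_lambda_min S lmin -> 0 < lmin.
Proof.
move=> S_pd [/eigenvalueP [w wS w0] _]; have := pd_dot S_pd w0.
by rewrite wS dotZl pmulr_lgt0 // lt_def dotxx_eq0 w0 dotxx_ge0.
Qed.

Section MmatSpectrum.
Variables (R : rcfType) (n m : nat) (A : 'M[R]_m) (B : 'M[R]_(n, m)) (C : 'M[R]_n).
Variables (L mu r lmin : R).
Hypotheses (mu_gt0 : 0 < mu) (mu_le : mu <= L) (rmu : 2 * L <= r * mu).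
Hypotheses (A_sym : A^T = A) (C_sym : C^T = C).
Hypotheses (A_ge : loewner_le mu%:M A) (A_le : loewner_le A L%:M).
Hypotheses (B_le : opnorm2_le B L) (C_le : opnorm2_le C L).
Hypotheses (lmin_gt0 : 0 < lmin).
Hypothesis S_ge : forall x : 'rV_n, lmin * dot x x <= dot (x *m (C + B *m invmx A *m B^T)) x.
Local Notation M := (Mmat A B C r).

Let L_ge0 : 0 <= L. Proof. exact: ltW (lt_le_trans mu_gt0 mu_le). Qed.

Lemma Mmat_real_eigen (w : 'rV_(n + m)) a :
  w != 0 -> w *m M = a *: w -> - (r * L) <= a <= - Num.min L lmin.
Proof.
rewrite -[w]hsubmxK mul_row_Mmat scale_row_mx.
set x := lsubmx w; set y := rsubmx w => w0 /eq_row_mx [Ex Ey].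
set X := dot x x; set Y := dot y y; set g := dot (x *m C) x.
set P := dot (y *m B^T) x; set al := dot (y *m A) y.
set om := dot (y *m invmx A) y.
set s := dot (x *m (C + B *m invmx A *m B^T)) x.
have eqX : - g + r * P = a * X.
  by have := congr1 (fun z => dot z x) Ex; rewrite /= dotDl dotNl !dotZl.
have eqY : - P - r * al = a * Y.
  have := congr1 (fun z => dot z y) Ey; rewrite /= dotBl dotNl !dotZl.
  by rewrite dot_mulmx dotC.
have xB : x *m B = - (a *: y) - r *: (y *m A) by rewrite -Ey opprD !opprK addrK.
have A_unit := loewner_ge_scalar_unitmx mu_gt0 A_ge.
(* The Schur complement form, after substituting [x B] from the second block row. *)
have eq_s : s = - a * X + a * r * Y + a ^+ 2 * om.
  rewrite /s mulmxDr dotDl -/g !mulmxA dot_mulmx trmxK xB.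
  rewrite mulmxBl mulNmx -!scalemxAl mulmxK //.
  rewrite !(dotDl, dotBl, dotDr, dotBr, dotNl, dotNr, dotZl, dotZr).
  have -> : dot (y *m invmx A) (y *m A) = Y.
    by rewrite -[in y *m A]A_sym -dot_mulmx mulmxKV.
  rewrite [dot y (y *m A)]dotC -/al -/om.
  have -> : g = r * P - a * X by rewrite -eqX; ring.
  have -> : P = - (r * al) - a * Y by rewrite -[a * Y]eqY; ring.
  by rewrite -/Y; ring.
have [om_ge0 om_le] := loewner_ge_scalar_dot_invmx y mu_gt0 A_ge.
have al_ge : mu * Y <= al by rewrite -dot_mul_scalar_mx loewner_le_dot.
have al_le : al <= L * Y by rewrite -dot_mul_scalar_mx loewner_le_dot.
have g_sqr : g ^+ 2 <= (L * X) ^+ 2.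
  have := opnorm2_le_dot_sqr x x L_ge0 C_le.
  by rewrite C_sym -/g -/X exprMn expr2 mulrA.
have P_sqr : P ^+ 2 <= L ^+ 2 * X * Y.
  by rewrite mulrAC; exact: opnorm2_le_dot_sqr.
have XY_gt0 : 0 < X + Y.
  rewrite lt_def addr_ge0 ?dotxx_ge0 ?andbT //.
  by rewrite paddr_eq0 ?dotxx_ge0 // !dotxx_eq0 -row_mx_eq0.
have muxL : Num.min L lmin <= L by rewrite ge_min lexx.
have muxl : Num.min L lmin <= lmin by rewrite ge_min lexx orbT.
exact: (real_eig_bounds mu_gt0 mu_le rmu muxL muxl lmin_gt0
  (dotxx_ge0 x) (dotxx_ge0 y) XY_gt0 al_ge al_le om_ge0 om_le g_sqr P_sqr (S_ge x) eqX eqY eq_s).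
Qed.

Lemma Mmat_cplx_eigen (p q : 'rV_(n + m)) a b :
  (p != 0) || (q != 0) -> b != 0 ->
  p *m M = a *: p - b *: q -> q *m M = a *: q + b *: p ->
  a <= - L / 2 /\ a ^+ 2 + b ^+ 2 <= 2 * L ^+ 2 * (r + 1).
Proof.
rewrite -[p]hsubmxK -[q]hsubmxK !mul_row_Mmat !scale_row_mx opp_row_mx !add_row_mx.
set x1 := lsubmx p; set y1 := rsubmx p; set x2 := lsubmx q; set y2 := rsubmx q.
move=> pq0 b0 /eq_row_mx [E1 E2] /eq_row_mx [E3 E4].
set X := dot x1 x1 + dot x2 x2; set Y := dot y1 y1 + dot y2 y2.
set g := dot (x1 *m C) x1 + dot (x2 *m C) x2.
set P := dot (y1 *m B^T) x1 + dot (y2 *m B^T) x2.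
set Q := dot (y1 *m B^T) x2 - dot (y2 *m B^T) x1.
set al := dot (y1 *m A) y1 + dot (y2 *m A) y2.
have := congr1 (fun z => dot z x1) E1; have := congr1 (fun z => dot z x2) E3.
have := congr1 (fun z => dot z x2) E1; have := congr1 (fun z => dot z x1) E3.
have := congr1 (fun z => dot z y1) E2; have := congr1 (fun z => dot z y2) E4.
have := congr1 (fun z => dot z y2) E2; have := congr1 (fun z => dot z y1) E4.
rewrite /= !(dotDl, dotBl, dotNl, dotZl).
rewrite (dot_sym_mx x1 x2 C_sym) (dot_sym_mx y1 y2 A_sym) [dot x2 x1]dotC [dot y2 y1]dotC.
rewrite !(dot_mulmx B x1) !(dot_mulmx B x2) ![dot x1 (_ *m B^T)]dotC ![dot x2 (_ *m B^T)]dotC.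
move=> d1 d2 d3 d4 d5 d6 d7 d8.
have eqX : - g + r * P = a * X by rewrite /g /P /X; lra.
have eqXi : r * Q = - b * X by rewrite /Q /X; lra.
have eqY : - P - r * al = a * Y by rewrite /P /al /Y; lra.
have eqYi : Q = - b * Y by rewrite /Q /Y; lra.
have al_ge : mu * Y <= al.
  by rewrite /al /Y mulrDr lerD // -dot_mul_scalar_mx loewner_le_dot.
have g_sqr : g ^+ 2 <= (L * X) ^+ 2.
  have := opnorm2_le_dot2_sqr x1 x2 x1 x2 L_ge0 C_le; rewrite C_sym -/g -/X.
  by rewrite exprMn expr2 mulrA; apply: le_trans; rewrite lerDl sqr_ge0.
have PQ_sqr : P ^+ 2 + Q ^+ 2 <= L ^+ 2 * X * Y.
  have := opnorm2_le_dot2_sqr y1 y2 x1 x2 L_ge0 B_le.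
  have -> : (dot (y2 *m B^T) x1 - dot (y1 *m B^T) x2) ^+ 2 = Q ^+ 2 by rewrite -sqrrN opprB.
  by rewrite -/P -/Y -/X mulrAC.
have XY_gt0 : 0 < X + Y.
  rewrite lt_def !addr_ge0 ?dotxx_ge0 ?andbT //.
  rewrite !paddr_eq0 ?addr_ge0 ?dotxx_ge0 // !dotxx_eq0.
  by move: pq0; rewrite !row_mx_eq0; case: (x1 == 0); case: (x2 == 0); case: (y1 == 0).
exact: (cplx_eig_bounds mu_gt0 mu_le rmu b0 (addr_ge0 (dotxx_ge0 x1) (dotxx_ge0 x2))
  (addr_ge0 (dotxx_ge0 y1) (dotxx_ge0 y2)) XY_gt0 al_ge g_sqr PQ_sqr eqX eqY eqXi eqYi).
Qed.

Lemma Mmat_eigenvalue_stable (e : R) (l : R[i]) :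
  0 <= e -> e * (4 * r * L) = 1 -> eigenvalue (cplx_mx M) l ->
  stable_region (Num.min L lmin * e / 16)
    (complex.Re (e%:C%C * l)) (complex.Im (e%:C%C * l)).
Proof.
move=> e0 erL /eigenvalueP [v vM v0].
have [pM qM] := cplx_mx_eigenvector_ReIm vM.
set p := map_mx _ v in pM qM; set q := map_mx _ v in pM qM.
have pq0 : (p != 0) || (q != 0).
  apply: contraNT v0; rewrite negb_or !negbK => /andP [/eqP p0 /eqP q0].
  apply/eqP/rowP => j; move/rowP/(_ j): p0; move/rowP/(_ j): q0; rewrite !mxE.
  by case: (v 0 j) => ? ? /= -> ->.
have -> : complex.Re (e%:C%C * l) = e * complex.Re l by case: (l) => ? ? /=; ring.
have -> : complex.Im (e%:C%C * l) = e * complex.Im l by case: (l) => ? ? /=; ring.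
have r2 : 2 <= r by rewrite -(ler_pM2r mu_gt0); have := rmu; have := mu_le; lra.
have mux_bounds : 0 <= Num.min L lmin <= L.
  by rewrite ge_min lexx le_min L_ge0 ltW.
have [b0|b_neq0] := eqVneq (complex.Im l) 0; last first.
  have [a_le ab_le] := Mmat_cplx_eigen pq0 b_neq0 pM qM.
  exact: cplx_eig_stable r2 erL e0 mux_bounds a_le ab_le.
rewrite b0 mulr0; move: pM qM; rewrite b0 !scale0r subr0 addr0 => pM qM.
apply: real_eig_stable r2 erL e0 mux_bounds _.
by case/orP: pq0 => [/Mmat_real_eigen/(_ pM) | /Mmat_real_eigen/(_ qM)].
Qed.

End MmatSpectrum.

Lemma cplx_mx_affine (R : rcfType) k (N : 'M[R]_k) (e : R) :
  cplx_mx (1%:M + e *: N) = 1%:M + e%:C%C *: cplx_mx N.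
Proof. by rewrite /cplx_mx map_mxD map_mx1 map_mxZ. Qed.

Lemma cplx_mx_quadratic (R : rcfType) k (N : 'M[R]_k) (e : R) :
  cplx_mx (1%:M + e *: N + e ^+ 2 *: (N *m N))
  = 1%:M + e%:C%C *: cplx_mx N + e%:C%C ^+ 2 *: (cplx_mx N *m cplx_mx N).
Proof. by rewrite /cplx_mx !map_mxD map_mx1 !map_mxZ map_mxM rmorphXn. Qed.

Theorem lemma2 (R : rcfType) (m n : nat)
  (A : 'M[R]_m) (B : 'M[R]_(n, m)) (C : 'M[R]_n) (L mu : R)
  (hmu : 0 < mu) (hmuL : mu <= L)
  (hAsym : A^T = A) (hCsym : C^T = C)
  (hAlo : loewner_le (mu%:M) A) (hAhi : loewner_le A (L%:M))
  (hB : opnorm2_le B L) (hC : opnorm2_le C L)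
  (hS : pd (C + B *m invmx A *m B^T))
  (lmin : R) (hlmin : is_lambda_min (C + B *m invmx A *m B^T) lmin)
  (r : R) (hr : 2 * (L / mu) <= r)
  (rho1 rho2 : R) :
  let mu_x := Num.min L lmin in
  let kappa_x := L / mu_x in
  let eta_x := (4 * r * L)^-1 in
  let M := Mmat A B C r in
  is_spectral_radius (1%:M + eta_x *: M) rho1 ->
  is_spectral_radius (1%:M + eta_x *: M + eta_x ^+ 2 *: (M *m M)) rho2 ->
  Num.max rho1 rho2 <= 1 - (64 * r * kappa_x)^-1.
Proof.
move=> mux kx e M [[z1 [z1_eig <-]] _] [[z2 [z2_eig <-]] _].
have L_gt0 : 0 < L := lt_le_trans hmu hmuL.
have rmu : 2 * L <= r * mu by have := ler_wpM2r (ltW hmu) hr; rewrite -mulrA divfK ?gt_eqF.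
have r_gt0 : 0 < r by rewrite -(pmulr_lgt0 _ hmu); lra.
have lmin_gt0 := pd_lambda_min_gt0 hS hlmin.
have S_sym : (C + B *m invmx A *m B^T)^T = C + B *m invmx A *m B^T.
  by rewrite linearD /= !trmx_mul trmxK trmx_inv hAsym hCsym mulmxA.
have S_ge x := symmx_lambda_min_dot x S_sym hlmin.
have mux_gt0 : 0 < mux by rewrite lt_min L_gt0.
have e_gt0 : 0 < e by rewrite invr_gt0 !mulr_gt0.
have erL : e * (4 * r * L) = 1 by rewrite mulVf // !mulf_neq0 ?gt_eqF.
have -> : (64 * r * kx)^-1 = mux * e / 16 by rewrite /kx /e; field; rewrite ?gt_eqF.
have stable := Mmat_eigenvalue_stable hmu hmuL rmu hAsym hCsym hAlo hAhi hB hC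
  lmin_gt0 S_ge (ltW e_gt0) erL.
have e_neq0 : e%:C%C != 0 by rewrite fmorph_eq0 gt_eqF.
have d_ge0 : 0 <= mux * e / 16 by rewrite divr_ge0 ?mulr_ge0 ?ltW.
rewrite ge_max; apply/andP; split.
  move: z1_eig; rewrite cplx_mx_affine => /(eigenvalue_affine e_neq0) [l /stable l_stable ->].
  exact: stable_region_normc1.
move: z2_eig; rewrite cplx_mx_quadratic => /(eigenvalue_quadratic e_neq0) [l /stable l_stable ->].
exact: stable_region_normc2 d_ge0 l_stable.
Qed.
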